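(* Let $a,b,\epsilon>0$ and let $n,U,d,m$ be positive integers. Let $X\in\mathbb{R}^{n\times U\times d}$ satisfy $\|X_{i,u,\cdot}\|_2\le b$ for all $i\in\{1,\dots,n\}$ and $u\in\{1,\dots,U\}$, and let $M\in\mathbb{R}^{d\times m}$ be any fixed matrix. Then $$\log\mathcal{N}\Big(\{XA:\ A\in\mathbb{R}^{d\times m},\ \|A-M\|_{F}\le a\},\ \epsilon,\ \|\cdot\|_\infty\Big)\ \le\ \frac{36a^2b^2}{\epsilon^2}\log_2\!\Big[\Big(\frac{8ab}{\epsilon}+7\Big)mnU\Big],$$ where $\|\cdot\|_\infty$ is the maximum absolute entry on $\mathbb{R}^{n\times U\times m}$.
   Context: For $X\in\mathbb{R}^{n\times U\times d}$ and $A\in\mathbb{R}^{d\times m}$, $XA\in\mathbb{R}^{n\times U\times m}$ is defined by $(XA)_{i,u,j}=\sum_{o=1}^d X_{i,u,o}A_{o,j}$ (index $i$: sample, $u$: convolutional patch, $j$: output channel). $\|\cdot\|_F$ is the Frobenius norm. For a subset $V$ of a normed space $(\mathbb{R}^N,\|\cdot\|)$, the covering number $\mathcal{N}(V,\epsilon,\|\cdot\|)$ is the minimum cardinality $k$ of a collection $v^1,\dots,v^k\in\mathbb{R}^N$ with $\sup_{v\in V}\min_{j}\|v-v^j\|\le\epsilon$. $\log$ is the natural logarithm. *)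

From Stdlib Require Import Reals List.
Open Scope R_scope.

Fixpoint rsum (n : nat) (f : nat -> R) : R :=
  match n with
  | O => 0
  | S k => rsum k f + f k
  end.

(* (XA)_{i,u,j} = sum_{o<d} X_{i,u,o} A_{o,j} ; tensors as functions on 0-based indices *)
Definition tmul (d : nat) (X : nat -> nat -> nat -> R) (A : nat -> nat -> R)
  : nat -> nat -> nat -> R :=
  fun i u j => rsum d (fun o => X i u o * A o j).

Definition frob (d m : nat) (A : nat -> nat -> R) : R :=
  sqrt (rsum d (fun o => rsum m (fun j => (A o j) ^ 2))).

Definition row_norm (d : nat) (X : nat -> nat -> nat -> R) (i u : nat) : R :=
  sqrt (rsum d (fun o => (X i u o) ^ 2)).

Definition dist_inf_le (n U m : nat) (v w : nat -> nat -> nat -> R) (eps : R) : Prop :=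
  forall i u j, (i < n)%nat -> (u < U)%nat -> (j < m)%nat -> Rabs (v i u j - w i u j) <= eps.

(* centers (a list of points of R^{n x U x m}) form an eps-cover of V in ||.||_inf:
   sup_{v in V} min_j ||v - v^j||_inf <= eps (the min over a finite list is attained) *)
Definition is_cover (n U m : nat) (V : (nat -> nat -> nat -> R) -> Prop) (eps : R)
  (centers : list (nat -> nat -> nat -> R)) : Prop :=
  forall v, V v -> exists c, In c centers /\ dist_inf_le n U m v c eps.

Definition covering_number (n U m : nat) (V : (nat -> nat -> nat -> R) -> Prop) (eps : R)
  (N : nat) : Prop :=
  (exists centers, length centers = N /\ is_cover n U m V eps centers) /\
  (forall centers, is_cover n U m V eps centers -> (N <= length centers)%nat).

Definition log2 (x : R) : R := ln x / ln 2.

From Stdlib Require Import Reals List.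
From Stdlib Require Import Lia Lra Psatz ZArith Wf_nat Classical.
Import ListNotations.
Open Scope R_scope.

(* Start from W := M. While some entry (i,u,j) of XW
   is eps-far from the corresponding entry of XA, add +/-(eps/b^2) X_{i,u,.}
   to column j of W, with the sign of that entry of XA - XW: expanding the
   square, this lowers ||A - W||_F^2 by at least eps^2/b^2. As
   ||A - M||_F^2 <= a^2, after T = floor(a^2 b^2 / eps^2) moves XW is an
   eps-approximation of XA. The final W only depends on the word of T moves
   over an alphabet of 2nUm + 1 letters (one idle letter), so
   ln N <= T ln(2nUm + 1), which is well within the stated bound. *)

Lemma rsum_ext n f g : (forall k, (k < n)%nat -> f k = g k) -> rsum n f = rsum n g.
Proof.
  induction n as [|n IH]; intros Hfg; simpl; [reflexivity|].
  rewrite IH, Hfg by first [lia | intros; apply Hfg; lia]; reflexivity.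
Qed.

Lemma rsum_add n f g : rsum n (fun k => f k + g k) = rsum n f + rsum n g.
Proof. induction n as [|n IH]; simpl; [lra|]. rewrite IH; ring. Qed.

Lemma rsum_sub n f g : rsum n (fun k => f k - g k) = rsum n f - rsum n g.
Proof. induction n as [|n IH]; simpl; [lra|]. rewrite IH; ring. Qed.

Lemma rsum_scal n c f : rsum n (fun k => c * f k) = c * rsum n f.
Proof. induction n as [|n IH]; simpl; [lra|]. rewrite IH; ring. Qed.

Lemma rsum_zero n : rsum n (fun _ => 0) = 0.
Proof. induction n as [|n IH]; simpl; [lra|]. rewrite IH; ring. Qed.

Lemma rsum_nonneg n f : (forall k, (k < n)%nat -> 0 <= f k) -> 0 <= rsum n f.
Proof.
  induction n as [|n IH]; intros Hf; simpl; [lra|].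
  assert (0 <= rsum n f) by (apply IH; intros; apply Hf; lia).
  assert (0 <= f n) by (apply Hf; lia).
  lra.
Qed.

Lemma rsum_update n j f g : (j < n)%nat -> (forall k, k <> j -> f k = g k) ->
  rsum n f = rsum n g + (f j - g j).
Proof.
  induction n as [|n IH]; intros Hj Hfg; simpl; [lia|].
  destruct (Nat.eq_dec n j) as [<-|Hnj].
  - rewrite (rsum_ext n f g) by (intros k Hk; apply Hfg; lia); ring.
  - rewrite IH, (Hfg n Hnj) by (lia || assumption); ring.
Qed.

Lemma le_sq_of_sqrt_le s b : 0 <= s -> sqrt s <= b -> s <= b ^ 2.
Proof.
  intros Hs Hsb; rewrite <- (pow2_sqrt s) by exact Hs.
  apply pow_incr; split; [apply sqrt_pos | exact Hsb].
Qed.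

Lemma ln_le x y : 0 < x -> x <= y -> ln x <= ln y.
Proof.
  intros Hx [Hxy | <-]; [left; apply ln_increasing; assumption | right; reflexivity].
Qed.

Lemma ln_le_log2 y : 1 <= y -> ln y <= log2 y.
Proof.
  intros Hy; unfold log2.
  assert (Hln2 : 0 < ln 2 < 1).
  { split; [pose proof ln_lt_2; lra|].
    rewrite <- (ln_exp 1); apply ln_increasing; [lra|].
    pose proof (exp_ineq1 1); lra. }
  assert (Hlny : 0 <= ln y) by (rewrite <- ln_1; apply ln_le; lra).
  apply Rmult_le_reg_r with (ln 2); [lra|].
  unfold Rdiv; rewrite Rmult_assoc, Rinv_l by lra; nra.
Qed.

Lemma nat_floor_spec x : 0 <= x -> exists T : nat, INR T <= x < INR (S T).
Proof.
  intros Hx; exists (Z.to_nat (Zfloor x)).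
  rewrite S_INR, INR_IZR_INZ, Z2Nat.id by (apply Zfloor_lub; lra).
  apply Zfloor_bound.
Qed.

Lemma covering_number_exists n U m V eps cover :
  is_cover n U m V eps cover ->
  exists N, covering_number n U m V eps N /\ (N <= length cover)%nat.
Proof.
  intros Hcover.
  destruct (dec_inh_nat_subset_has_unique_least_element
              (fun N => exists centers, length centers = N /\ is_cover n U m V eps centers))
    as (N & ((centers & Hlen & Hcenters) & Hleast) & _).
  - intros N; apply classic.
  - exists (length cover), cover; split; [reflexivity | exact Hcover].
  - exists N; repeat split.
    + exists centers; split; assumption.
    + intros centers' Hc'; apply Hleast; exists centers'; split; [reflexivity | exact Hc'].
    + apply Hleast; exists cover; split; [reflexivity | exact Hcover].
Qed.

Lemma covering_number_pos n U m (V : (nat -> nat -> nat -> R) -> Prop) eps N v :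
  V v -> covering_number n U m V eps N -> (1 <= N)%nat.
Proof.
  intros Hv [(centers & <- & Hcenters) _].
  destruct (Hcenters v Hv) as (c & Hc & _).
  destruct centers; [contradiction | simpl; lia].
Qed.

Fixpoint words {T : Type} (al : list T) (t : nat) : list (list T) :=
  match t with
  | O => [[]]
  | S t' => map (fun p => fst p :: snd p) (list_prod al (words al t'))
  end.

Lemma words_length {T : Type} (al : list T) t : length (words al t) = (length al ^ t)%nat.
Proof.
  induction t as [|t IH]; simpl; [reflexivity|].
  rewrite length_map, length_prod, IH; reflexivity.
Qed.

Lemma In_words {T : Type} (al : list T) l : incl l al -> In l (words al (length l)).
Proof.
  induction l as [|x l IH]; intros Hl; simpl; [left; reflexivity|].
  apply in_map_iff; exists (x, l); split; [reflexivity|].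
  apply in_prod_iff; split.
  - apply Hl; left; reflexivity.
  - apply IH; intros y Hy; apply Hl; right; exact Hy.
Qed.

Lemma far_entry_of_not_dist_inf_le n U m v w eps : ~ dist_inf_le n U m v w eps ->
  exists i u j, (i < n)%nat /\ (u < U)%nat /\ (j < m)%nat /\ eps < Rabs (v i u j - w i u j).
Proof.
  intros Hfar; apply NNPP; intros Hclose; apply Hfar.
  intros i u j Hi Hu Hj; apply Rnot_lt_le; intros Hij; apply Hclose; exists i, u, j; auto.
Qed.

(* [frob d m (fun o j => A o j - W o j)] is [sqrt (sqdist d m W A)] by conversion. *)
Definition sqdist (d m : nat) (W A : nat -> nat -> R) : R :=
  rsum d (fun o => rsum m (fun j => (A o j - W o j) ^ 2)).

Lemma sqdist_nonneg d m W A : 0 <= sqdist d m W A.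
Proof. apply rsum_nonneg; intros; apply rsum_nonneg; intros; apply pow2_ge_0. Qed.

(* [None] is the idle move; it pads greedy runs that stop early. *)
Definition move : Type := option (nat * nat * nat * bool).

Definition moves (n U m : nat) : list move :=
  None :: map Some (list_prod (list_prod (list_prod (seq 0 n) (seq 0 U)) (seq 0 m))
                              [true; false]).

Lemma moves_length n U m : length (moves n U m) = S (n * U * m * 2).
Proof. unfold moves; simpl; rewrite length_map, !length_prod, !length_seq; reflexivity. Qed.

Definition sg (s : bool) : R := if s then 1 else -1.

Definition sign_of (e : R) : bool := if Rle_dec 0 e then true else false.

Lemma sg_sign_of e : sg (sign_of e) * e = Rabs e.
Proof.
  unfold sign_of, sg; destruct (Rle_dec 0 e).
  - rewrite Rabs_right by lra; ring.
  - rewrite Rabs_left by lra; ring.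
Qed.

Definition shift (X : nat -> nat -> nat -> R) (eta : R) (c : move) (W : nat -> nat -> R)
  : nat -> nat -> R :=
  match c with
  | None => W
  | Some (i, u, j, s) =>
      fun o k => if Nat.eq_dec k j then W o k + eta * sg s * X i u o else W o k
  end.

Definition shifts X eta (l : list move) W := fold_left (fun W c => shift X eta c W) l W.

Lemma shifts_idle X eta t W : shifts X eta (repeat None t) W = W.
Proof. induction t as [|t IH]; [reflexivity | exact IH]. Qed.

Lemma sqdist_shift d m X eta W A i u j s : (j < m)%nat ->
  sqdist d m (shift X eta (Some (i, u, j, s)) W) A =
  sqdist d m W A - 2 * eta * (sg s * rsum d (fun o => (A o j - W o j) * X i u o))
  + eta ^ 2 * rsum d (fun o => X i u o ^ 2).
Proof.
  intros Hj; unfold sqdist.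
  rewrite (rsum_ext d _ (fun o => rsum m (fun k => (A o k - W o k) ^ 2)
             + (- (2 * eta * sg s) * ((A o j - W o j) * X i u o) + eta ^ 2 * X i u o ^ 2))).
  - rewrite !rsum_add, !rsum_scal; ring.
  - intros o _; cbn [shift].
    rewrite (rsum_update m j _ (fun k => (A o k - W o k) ^ 2)) by
      (exact Hj || (intros k Hk; destruct (Nat.eq_dec k j); [contradiction | reflexivity])).
    destruct (Nat.eq_dec j j); [destruct s; unfold sg; ring | contradiction].
Qed.

Section Greedy.

Variables (n U d m : nat) (X : nat -> nat -> nat -> R) (A : nat -> nat -> R) (b eps : R).
Hypotheses (Hb : 0 < b) (Heps : 0 < eps)
  (Hrow : forall i u, (i < n)%nat -> (u < U)%nat -> row_norm d X i u <= b).

Lemma descent_move W : ~ dist_inf_le n U m (tmul d X A) (tmul d X W) eps ->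
  exists c, In c (moves n U m) /\
    sqdist d m (shift X (eps / b ^ 2) c W) A <= sqdist d m W A - eps ^ 2 / b ^ 2.
Proof.
  intros Hfar; apply far_entry_of_not_dist_inf_le in Hfar as (i & u & j & Hi & Hu & Hj & Hfar).
  set (e := rsum d (fun o => (A o j - W o j) * X i u o)).
  assert (He : tmul d X A i u j - tmul d X W i u j = e).
  { unfold e, tmul; rewrite <- rsum_sub; apply rsum_ext; intros; ring. }
  rewrite He in Hfar.
  assert (HX : rsum d (fun o => X i u o ^ 2) <= b ^ 2).
  { apply le_sq_of_sqrt_le; [apply rsum_nonneg; intros; apply pow2_ge_0 | exact (Hrow i u Hi Hu)]. }
  exists (Some (i, u, j, sign_of e)); split.
  - right; apply in_map; rewrite !in_prod_iff, !in_seq.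
    repeat split; try lia.
    unfold sign_of; destruct (Rle_dec 0 e); simpl; auto.
  - rewrite sqdist_shift, sg_sign_of by exact Hj; fold e.
    set (eta := eps / b ^ 2).
    assert (Heta : 0 < eta) by (apply Rdiv_lt_0_compat; [lra | apply pow_lt; lra]).
    assert (eta * eps = eps ^ 2 / b ^ 2) by (unfold eta; field; lra).
    assert (eta ^ 2 * b ^ 2 = eta * eps) by (unfold eta; field; lra).
    assert (0 <= eta ^ 2) by apply pow2_ge_0.
    nra.
Qed.

Lemma idle_word t W : dist_inf_le n U m (tmul d X A) (tmul d X W) eps ->
  exists l, length l = t /\ incl l (moves n U m) /\
    dist_inf_le n U m (tmul d X A) (tmul d X (shifts X (eps / b ^ 2) l W)) eps.
Proof.
  intros Hclose; exists (repeat None t); repeat split.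
  - apply repeat_length.
  - intros c Hc; apply repeat_spec in Hc; subst; left; reflexivity.
  - rewrite shifts_idle; exact Hclose.
Qed.

Lemma greedy_approximation t : forall W,
  sqdist d m W A < INR (S t) * (eps ^ 2 / b ^ 2) ->
  exists l, length l = t /\ incl l (moves n U m) /\
    dist_inf_le n U m (tmul d X A) (tmul d X (shifts X (eps / b ^ 2) l W)) eps.
Proof.
  induction t as [|t IH]; intros W HW;
    (destruct (classic (dist_inf_le n U m (tmul d X A) (tmul d X W) eps)) as [Hclose | Hfar];
     [apply idle_word, Hclose |]);
    destruct (descent_move W Hfar) as (c & Hc & Hdesc);
    pose proof (sqdist_nonneg d m (shift X (eps / b ^ 2) c W) A).
  - simpl INR in HW; lra.
  - destruct (IH (shift X (eps / b ^ 2) c W)) as (l & Hlen & Hl & Happrox).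
    + rewrite S_INR in HW; lra.
    + exists (c :: l); split; [simpl; congruence | split; [| exact Happrox]].
      intros c' [<- | Hc']; [exact Hc | exact (Hl c' Hc')].
Qed.

End Greedy.

Lemma sqdist_refl d m W : sqdist d m W W = 0.
Proof.
  unfold sqdist; rewrite <- (rsum_zero d); apply rsum_ext; intros o _.
  rewrite <- (rsum_zero m); apply rsum_ext; intros j _; ring.
Qed.

Lemma greedy_cover n U d m X b eps (a : R) (M : nat -> nat -> R) T :
  0 < b -> 0 < eps ->
  (forall i u, (i < n)%nat -> (u < U)%nat -> row_norm d X i u <= b) ->
  a ^ 2 * b ^ 2 / eps ^ 2 < INR (S T) ->
  is_cover n U m
    (fun v => exists A, frob d m (fun o j => A o j - M o j) <= a /\ v = tmul d X A) eps
    (map (fun l => tmul d X (shifts X (eps / b ^ 2) l M)) (words (moves n U m) T)).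
Proof.
  intros Hb Heps Hrow HT v (A & HA & ->).
  assert (HMA : sqdist d m M A <= a ^ 2) by (apply le_sq_of_sqrt_le; [apply sqdist_nonneg | exact HA]).
  destruct (greedy_approximation n U d m X A b eps Hb Heps Hrow T M) as (l & Hlen & Hl & Happrox).
  - assert (Hc : 0 < eps ^ 2 / b ^ 2) by (apply Rdiv_lt_0_compat; apply pow_lt; lra).
    assert (a ^ 2 = a ^ 2 * b ^ 2 / eps ^ 2 * (eps ^ 2 / b ^ 2)) by (field; lra).
    nra.
  - exists (tmul d X (shifts X (eps / b ^ 2) l M)); split; [| exact Happrox].
    apply in_map_iff; exists l; split; [reflexivity |].
    rewrite <- Hlen; apply In_words; exact Hl.
Qed.

Lemma ln_le_of_le_pow (N K T : nat) x : (1 <= N)%nat -> (1 <= K)%nat -> (N <= K ^ T)%nat ->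
  INR T <= x -> ln (INR N) <= x * ln (INR K).
Proof.
  intros HN HK HNK HTx.
  assert (HlnK : 0 <= ln (INR K)) by (rewrite <- ln_1; apply ln_le; [lra | apply (le_INR 1); exact HK]).
  apply Rle_trans with (INR T * ln (INR K)); [| apply Rmult_le_compat_r; assumption].
  rewrite <- ln_pow, <- pow_INR by (apply (lt_INR 0); lia).
  apply ln_le; [apply (lt_INR 0); lia | apply le_INR; exact HNK].
Qed.

Lemma moves_count_le n U m c : (0 < n)%nat -> (0 < U)%nat -> (0 < m)%nat -> 0 <= c ->
  INR (S (n * U * m * 2)) <= (c + 7) * INR m * INR n * INR U.
Proof.
  intros Hn HU Hm Hc.
  assert (Hp : 1 <= INR n * INR U * INR m) by (rewrite <- !mult_INR; apply (le_INR 1); nia).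
  assert (0 <= c * (INR n * INR U * INR m)) by (apply Rmult_le_pos; lra).
  rewrite S_INR, !mult_INR; change (INR 2) with (1 + 1).
  replace ((c + 7) * INR m * INR n * INR U) with ((c + 7) * (INR n * INR U * INR m)) by ring.
  lra.
Qed.

Theorem mainTheorem1 (a b eps : R) (n U d m : nat)
  (X : nat -> nat -> nat -> R) (M : nat -> nat -> R) :
  0 < a -> 0 < b -> 0 < eps ->
  (0 < n)%nat -> (0 < U)%nat -> (0 < d)%nat -> (0 < m)%nat ->
  (forall i u, (i < n)%nat -> (u < U)%nat -> row_norm d X i u <= b) ->
  exists N : nat,
    covering_number n U m
      (fun v => exists A : nat -> nat -> R,
         frob d m (fun o j => A o j - M o j) <= a /\ v = tmul d X A)
      eps N /\
    ln (INR N) <= 36 * a ^ 2 * b ^ 2 / eps ^ 2 *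
                  log2 ((8 * a * b / eps + 7) * INR m * INR n * INR U).
Proof.
  intros Ha Hb Heps Hn HU Hd Hm Hrow.
  set (x := a ^ 2 * b ^ 2 / eps ^ 2).
  assert (Hx : 0 <= x) by (apply Rlt_le, Rdiv_lt_0_compat; [apply Rmult_lt_0_compat |]; apply pow_lt; lra).
  destruct (nat_floor_spec x Hx) as (T & HTx & HxT).
  destruct (covering_number_exists _ _ _ _ _ _ (greedy_cover n U d m X b eps a M T Hb Heps Hrow HxT))
    as (N & HN & HNle).
  exists N; split; [exact HN |].
  rewrite length_map, words_length, moves_length in HNle.
  assert (HN1 : (1 <= N)%nat).
  { apply (covering_number_pos _ _ _ _ _ _ (tmul d X M)) with (2 := HN).
    exists M; split; [| reflexivity].
    change (sqrt (sqdist d m M M) <= a); rewrite sqdist_refl, sqrt_0; lra. }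
  set (y := (8 * a * b / eps + 7) * INR m * INR n * INR U).
  assert (Hy : INR (S (n * U * m * 2)) <= y).
  { apply moves_count_le; try assumption.
    apply Rlt_le, Rdiv_lt_0_compat; nra. }
  pose proof (ln_le_of_le_pow N (S (n * U * m * 2)) T x HN1 ltac:(lia) HNle HTx).
  assert (ln (INR (S (n * U * m * 2))) <= ln y) by (apply ln_le; [apply (lt_INR 0); lia | exact Hy]).
  assert (Hy1 : 1 <= y) by (rewrite S_INR in Hy; pose proof (pos_INR (n * U * m * 2)); lra).
  assert (ln y <= log2 y) by (apply ln_le_log2, Hy1).
  assert (0 <= ln y) by (rewrite <- ln_1; apply ln_le; lra).
  replace (36 * a ^ 2 * b ^ 2 / eps ^ 2) with (36 * x) by (unfold x; field; lra).
  nra.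
Qed.
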